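(* Let $n\ge2$. The space $\mathrm{SL}(n,\mathbb R)/\mathrm{SL}(n,\mathbb Z)$ contains pairs of points which are not midpoint blockable. In particular, no point $m\in\mathrm{SL}(n,\mathbb R)/\mathrm{SL}(n,\mathbb Z)$ is midpoint blockable away from itself.
   Context: For a connected Lie group $G$ with Lie algebra $\mathfrak g$, lattice $\Gamma$, $M=G/\Gamma$: connecting curves for $m_1,m_2$ are $c(t)=\exp(tx)\cdot m_1$, $0\le t\le1$, $x\in\mathfrak g$, with $c(0)=m_1,c(1)=m_2$. The pair $m_1,m_2$ is midpoint blockable if $\{c(1/2): c \text{ a connecting curve}\}$ is finite; $m$ is midpoint blockable away from itself if the pair $m,m$ is midpoint blockable. *)

From HB Require Import structures.
From mathcomp Require Import all_boot all_order all_algebra.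
From mathcomp Require Import all_classical all_reals all_analysis.
Set Implicit Arguments. Unset Strict Implicit. Unset Printing Implicit Defensive.
Import Order.TTheory GRing.Theory Num.Theory numFieldNormedType.Exports.
Local Open Scope ring_scope.

(* Matrix exponential, defined entrywise as the limit of the partial sums
   of the exponential series  sum_k X^k / k!  (the series always converges). *)
Definition expm (R : realType) (n : nat) (X : 'M[R]_n) : 'M[R]_n :=
  \matrix_(i, j) limn (fun N : nat => ((\sum_(k < N) (k`!%:R)^-1 *: X ^+ k) i j : R^o)).

Definition in_SLR (R : realType) (n : nat) (g : 'M[R]_n) : Prop := \det g = 1.

Definition in_slR (R : realType) (n : nat) (x : 'M[R]_n) : Prop := \tr x = 0.

Definition in_SLZ (R : realType) (n : nat) (g : 'M[R]_n) : Prop :=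
  (forall i j, g i j \is a Num.int) /\ \det g = 1.

(* g SL(n,Z) = h SL(n,Z) as points of SL(n,R)/SL(n,Z) *)
Definition same_coset (R : realType) (n : nat) (g h : 'M[R]_n) : Prop :=
  in_SLZ (invmx g *m h).

(* x in sl(n,R) gives a connecting curve t |-> exp(tx) g1 Gamma from g1 Gamma
   to g2 Gamma *)
Definition connecting (R : realType) (n : nat) (g1 g2 x : 'M[R]_n) : Prop :=
  in_slR x /\ same_coset (expm x *m g1) g2.

(* the pair g1 Gamma, g2 Gamma is midpoint blockable: the set of midpoints
   c(1/2) = exp(x/2) g1 Gamma of connecting curves is a finite subset of
   SL(n,R)/SL(n,Z), i.e. it is covered by finitely many cosets *)
Definition midpoint_blockable (R : realType) (n : nat) (g1 g2 : 'M[R]_n) : Prop :=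
  exists s : seq 'M[R]_n,
    forall x, connecting g1 g2 x ->
      exists2 h, h \in s & same_coset (expm ((2%:R)^-1 *: x) *m g1) h.

Definition midpoint_blockable_away_from_itself (R : realType) (n : nat)
  (g : 'M[R]_n) : Prop := midpoint_blockable g g.

From mathcomp Require Import all_boot all_order all_algebra.
From mathcomp Require Import all_classical all_reals all_analysis.
From mathcomp Require Import ring.
Set Implicit Arguments. Unset Strict Implicit. Unset Printing Implicit Defensive.
Import Order.TTheory GRing.Theory Num.Theory numFieldNormedType.Exports.
Local Open Scope classical_set_scope.
Local Open Scope ring_scope.

(* Write h_a = diag(a, a^-1, 1, ..., 1) and let J be the generator of the rotations
   of the first coordinate plane.  Since rot(pi) = diag(-1, -1, 1, ..., 1) commutes
   with h_a and lies in SL(n,Z), the curve t |-> exp(t pi (g h_a) J (g h_a)^-1) g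
   = g h_a rot(t pi) h_a^-1 connects g SL(n,Z) to itself for every a != 0.  Its
   midpoint is g q_a with q_a = h_a rot(pi/2) h_a^-1, and q_b^-1 q_a =
   diag(b^2/a^2, a^2/b^2, 1, ..., 1) lies in SL(n,Z) only if a^2 = b^2.  Hence the
   midpoints for a = 1, 2, 3, ... lie in pairwise distinct cosets, and infinitely
   many cosets cannot be covered by a finite list. *)

Section IntegralMatrices.
Variable R : archiNumDomainType.

Definition intmx m (A : 'M[R]_m) := forall i j, A i j \is a Num.int.

Lemma intmx_det m (A : 'M[R]_m) : intmx A -> \det A \is a Num.int.
Proof.
move=> Aint; apply: rpred_sum => s _; apply: rpredM.
  by apply: rpredX; rewrite rpredN rpred1.
by apply: rpred_prod => i _; apply: Aint.
Qed.

Lemma intmx_scalar m (z : R) : z \is a Num.int -> intmx (z%:M : 'M[R]_m).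
Proof. by move=> z_int i j; rewrite mxE; case: (i == j); rewrite ?mulr1n ?mulr0n ?rpred0. Qed.

Lemma intmx_mul m (A B : 'M[R]_m) : intmx A -> intmx B -> intmx (A *m B).
Proof. by move=> Aint Bint i j; rewrite mxE; apply: rpred_sum => k _; apply: rpredM. Qed.

Lemma intmx_inv m (A : 'M[R]_m) : intmx A -> \det A = 1 -> intmx (invmx A).
Proof.
move=> Aint detA i j; rewrite /invmx unitmxE detA unitr1 invr1 scale1r !mxE /cofactor.
apply: rpredM; first by apply: rpredX; rewrite rpredN rpred1.
by apply: intmx_det => i' j'; rewrite !mxE; apply: Aint.
Qed.

End IntegralMatrices.

Section MatrixInverses.
Variables (R : comUnitRingType) (m : nat).
Implicit Types A B : 'M[R]_m.

Lemma invmx_right A B : A *m B = 1%:M -> invmx A = B.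
Proof.
by move=> AB; have [AU _] := mulmx1_unit AB; rewrite -[RHS](mulKmx AU) AB mulmx1.
Qed.

Lemma invmx_mul A B : A \in unitmx -> B \in unitmx ->
  invmx (A *m B) = invmx B *m invmx A.
Proof. by move=> AU BU; apply: invmx_right; rewrite mulmxA mulmxK // mulmxV. Qed.

End MatrixInverses.

Section UnimodularLattice.
Variables (R : realType) (m : nat).
Implicit Types g h u v : 'M[R]_m.

Lemma in_SLZ_mul g h : in_SLZ g -> in_SLZ h -> in_SLZ (g *m h).
Proof.
by move=> [gint detg] [hint deth]; split; [exact: intmx_mul | rewrite det_mulmx detg deth mulr1].
Qed.

Lemma in_SLZ_inv g : in_SLZ g -> in_SLZ (invmx g).
Proof.
move=> [gint detg]; split; first exact: intmx_inv.
by rewrite det_inv detg invr1.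
Qed.

Lemma in_SLZ_unit g : in_SLZ g -> g \in unitmx.
Proof. by move=> [_ detg]; rewrite unitmxE detg unitr1. Qed.

Lemma same_coset_in_SLZ u v h : u \in unitmx ->
  same_coset u h -> same_coset v h -> in_SLZ (invmx v *m u).
Proof.
move=> uU uh vh; have hU : h \in unitmx.
  by have := in_SLZ_unit uh; rewrite unitmx_mul => /andP[].
suff -> : invmx v *m u = (invmx v *m h) *m invmx (invmx u *m h).
  by apply: in_SLZ_mul => //; apply: in_SLZ_inv.
by rewrite invmx_mul ?unitmx_inv // invmxK mulmxA mulmxK.
Qed.

End UnimodularLattice.

Section TwoByTwo.
Variable R : pzRingType.

Definition mx2 (a b c d : R) : 'M[R]_2 :=
  \matrix_(i, j) if i == 0 :> nat then (if j == 0 :> nat then a else b)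
                 else (if j == 0 :> nat then c else d).

Lemma mul_mx2 a b c d a' b' c' d' :
  mx2 a b c d *m mx2 a' b' c' d' =
  mx2 (a * a' + b * c') (a * b' + b * d') (c * a' + d * c') (c * b' + d * d').
Proof.
apply/matrixP => i j; rewrite !mxE !big_ord_recl big_ord0 !mxE /= addr0.
by case: i => [[|[|i]] ?] //; case: j => [[|[|j]] ?].
Qed.

Lemma add_mx2 a b c d a' b' c' d' :
  mx2 a b c d + mx2 a' b' c' d' = mx2 (a + a') (b + b') (c + c') (d + d').
Proof.
apply/matrixP => i j; rewrite !mxE.
by case: i => [[|[|i]] ?] //; case: j => [[|[|j]] ?].
Qed.

Lemma scale_mx2 k a b c d : k *: mx2 a b c d = mx2 (k * a) (k * b) (k * c) (k * d).
Proof.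
apply/matrixP => i j; rewrite !mxE.
by case: i => [[|[|i]] ?] //; case: j => [[|[|j]] ?].
Qed.

Lemma mx2_scalar a : a%:M = mx2 a 0 0 a.
Proof.
apply/matrixP => i j; rewrite !mxE.
by case: i => [[|[|i]] ?] //; case: j => [[|[|j]] ?].
Qed.

Lemma mxtrace_mx2 a b c d : \tr (mx2 a b c d) = a + d.
Proof. by rewrite /mxtrace !big_ord_recl big_ord0 !mxE /= addr0. Qed.

End TwoByTwo.

Section BlockDiagonal.
Variables (R : comPzRingType) (n : nat).

Definition bdiag (A : 'M[R]_2) (B : 'M[R]_n) : 'M[R]_(n.+2) := block_mx A 0 0 B.

Lemma mul_bdiag A B A' B' : bdiag A B *m bdiag A' B' = bdiag (A *m A') (B *m B').
Proof. by rewrite /bdiag (mulmx_block A 0 0 B A' 0 0 B') !mulmx0 !mul0mx !addr0 !add0r. Qed.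

Lemma add_bdiag A B A' B' : bdiag A B + bdiag A' B' = bdiag (A + A') (B + B').
Proof. by rewrite /bdiag (add_block_mx A 0 0 B A' 0 0 B') !addr0. Qed.

Lemma scale_bdiag k A B : k *: bdiag A B = bdiag (k *: A) (k *: B).
Proof. by rewrite /bdiag (scale_block_mx k A 0 0 B) !scaler0. Qed.

Lemma bdiag1 : 1 = bdiag 1%:M 1%:M.
Proof. by rewrite /bdiag -scalar_mx_block. Qed.

Lemma exp_bdiag A B k : bdiag A B ^+ k = bdiag (A ^+ k) (B ^+ k).
Proof.
elim: k => [|k IHk]; first by rewrite !expr0 bdiag1.
by rewrite !exprS IHk -!mulmxE mul_bdiag.
Qed.

Lemma mxtrace_bdiag A B : \tr (bdiag A B) = \tr A + \tr B.
Proof. exact: (mxtrace_block A 0 0 B). Qed.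

Lemma det_bdiag A B : \det (bdiag A B) = \det A * \det B.
Proof. exact: (det_ublock A 0 B). Qed.

Lemma bdiagEul A B (i j : 'I_2) : bdiag A B (lshift n i) (lshift n j) = A i j.
Proof. exact: (block_mxEul A 0 0 B). Qed.

End BlockDiagonal.

Section MatrixExponential.
Variables (R : realType) (m : nat).
Implicit Types C X E : 'M[R]_m.

Definition expm_partial X (N : nat) : 'M[R]_m := \sum_(k < N) (k`!%:R)^-1 *: X ^+ k.

Definition has_expm X E := forall i j, (fun N => expm_partial X N i j) @ \oo --> E i j.

Lemma has_expmE X E : has_expm X E -> expm X = E.
Proof. by move=> XE; apply/matrixP => i j; rewrite mxE; apply: cvg_lim; [|exact: XE]. Qed.

Lemma expm_partial_conj C X N : C \in unitmx ->
  expm_partial (C *m X *m invmx C) N = C *m expm_partial X N *m invmx C.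
Proof.
move=> CU; have conjX k : (C *m X *m invmx C) ^+ k = C *m X ^+ k *m invmx C.
  elim: k => [|k IHk]; first by rewrite !expr0 mulmx1 mulmxV.
  by rewrite exprS IHk -!mulmxE !mulmxA mulmxKV // exprS -mulmxE mulmxA.
rewrite /expm_partial mulmx_sumr mulmx_suml; apply: eq_bigr => k _.
by rewrite conjX scalemxAl scalemxAr.
Qed.

Lemma has_expm_conj C X E : C \in unitmx -> has_expm X E ->
  has_expm (C *m X *m invmx C) (C *m E *m invmx C).
Proof.
move=> CU XE i j; under eq_fun do rewrite expm_partial_conj // mxE.
rewrite mxE; apply: cvg_big => [|l _]; first exact: add_continuous.
under eq_fun do rewrite mxE; rewrite mxE; apply: cvgMr_tmp.
apply: cvg_big => [|k _]; first exact: add_continuous.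
exact: cvgMl_tmp.
Qed.

End MatrixExponential.

Section PlaneRotations.
Variables (R : realType) (n : nat).
Local Notation M := 'M[R]_(n.+2).

Definition J2 : 'M[R]_2 := mx2 0 (-1) 1 0.

Lemma J2_sqr : J2 ^+ 2 = (-1)%:M.
Proof. by rewrite expr2 -mulmxE /J2 mul_mx2 mx2_scalar; congr mx2; ring. Qed.

Lemma J2X_double j : J2 ^+ j.*2 = (-1) ^+ j *: 1.
Proof. by rewrite -mul2n exprM J2_sqr -scalemx1 exprZn expr1n. Qed.

Lemma J2X_coeff t k :
  ((k`!%:R)^-1 * t ^+ k) *: J2 ^+ k = cos_coeff t k *: 1 + sin_coeff t k *: J2.
Proof.
rewrite -(odd_double_half k); move: k./2 => j; case: (odd k); rewrite ?add1n ?add0n.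
  rewrite [J2 ^+ _]exprS J2X_double -scalerAr mulr1 scalerA cos_coeff_odd scale0r add0r.
  by congr (_ *: _); rewrite /sin_coeff /= odd_double /= doubleK; ring.
rewrite J2X_double scalerA sin_coeff_even scale0r addr0.
by congr (_ *: _); rewrite /cos_coeff /= odd_double /= doubleK -exprnP; ring.
Qed.

Definition rot_gen : M := bdiag J2 0.

Definition rot (t : R) : M := bdiag (mx2 (cos t) (- sin t) (sin t) (cos t)) 1%:M.

(* The exponential series of [t *: rot_gen] splits along [P], [Q] and [rot_gen]
   into the series of the constant 1, of [cos t] and of [sin t]. *)
Let P : M := bdiag 0 1%:M.
Let Q : M := bdiag 1%:M 0.

Lemma rot_lin t : rot t = P + cos t *: Q + sin t *: rot_gen.
Proof.
rewrite /rot /P /Q /rot_gen !scale_bdiag !add_bdiag !scaler0 !addr0 add0r.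
congr bdiag; rewrite mx2_scalar /J2 !scale_mx2 add_mx2.
by congr mx2; ring.
Qed.

Lemma rot_genX_term t k :
  (k`!%:R)^-1 *: (t *: rot_gen) ^+ k =
  (k == 0)%:R *: P + cos_coeff t k *: Q + sin_coeff t k *: rot_gen.
Proof.
rewrite exprZn scalerA /rot_gen exp_bdiag /P /Q !scale_bdiag !add_bdiag.
rewrite !scaler0 !addr0 add0r J2X_coeff expr0n; congr bdiag.
by case: k => [|k]; rewrite /= ?expr0 ?invr1 ?mul1r ?scale1r // !scaler0 scale0r.
Qed.

Lemma has_expm_rot t : has_expm (t *: rot_gen) (rot t).
Proof.
move=> i j; rewrite rot_lin -[P]scale1r.
have partialE N : expm_partial (t *: rot_gen) N =
    (\sum_(0 <= k < N) (k == 0)%:R) *: P + series (cos_coeff t) N *: Q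
    + series (sin_coeff t) N *: rot_gen.
  rewrite /expm_partial /series /= !scaler_suml -!big_split /= big_mkord.
  by apply: eq_bigr => k _; rewrite rot_genX_term.
under eq_fun do rewrite partialE !mxE.
rewrite !mxE; apply: cvgD; first apply: cvgD.
- apply: cvgMr_tmp; apply: cvg_near_cst; near=> N.
  have N_gt0 : (0 < N)%N by near: N; exists 1%N.
  rewrite big_ltn // eqxx big_nat_cond big1 ?addr0 // => k /andP[/andP[]].
  by case: k.
- apply: cvgMr_tmp; rewrite cos.unlock; exact: is_cvg_series_cos_coeff.
- apply: cvgMr_tmp; rewrite sin.unlock; exact: is_cvg_series_sin_coeff.
Unshelve. all: end_near.
Qed.

End PlaneRotations.

Arguments rot_gen {R n}.
Arguments rot {R n}.

Lemma int_ratio_eq (R : archiNumFieldType) (p q : R) : 0 < p -> 0 < q ->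
  p / q \is a Num.int -> q / p \is a Num.int -> p = q.
Proof.
move=> p_gt0 q_gt0 pq_int qp_int.
have ratio_ge1 (x y : R) : 0 < x -> 0 < y -> x / y \is a Num.int -> y <= x.
  move=> x_gt0 y_gt0 xy_int; have xy_gt0 : 0 < x / y by rewrite divr_gt0.
  have : 1 <= x / y by rewrite -[x / y]gtr0_norm // norm_intr_ge1 ?gt_eqF.
  by rewrite ler_pdivlMr // mul1r.
by apply/eqP; rewrite eq_le !ratio_ge1.
Qed.

Lemma nat_pigeonhole (T : eqType) (s : seq T) (f : nat -> T) :
  (forall k, f k \in s) -> exists i j, (i < j)%N /\ f i = f j.
Proof.
move=> fs; have : ~~ uniq (map f (iota 0 (size s).+1)).
  apply/negP => /uniq_leq_size le_s; have /le_s : {subset map f (iota 0 (size s).+1) <= s}.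
    by move=> _ /mapP[k _ ->].
  by rewrite size_map size_iota ltnn.
case/(uniqPn (f 0)) => i [j []]; rewrite size_map size_iota => lt_ij lt_j.
by rewrite !(nth_map 0) ?size_iota ?(ltn_trans lt_ij) // !nth_iota ?(ltn_trans lt_ij) //; exists i, j.
Qed.

Section Midpoints.
Variables (R : realType) (n : nat).
Local Notation M := 'M[R]_(n.+2).
Implicit Types (g h : M) (a p q : R).

Definition hyp a : M := bdiag (mx2 a 0 0 a^-1) 1%:M.

Definition quarter p : M := bdiag (mx2 0 (- p) p^-1 0) 1%:M.

Lemma hyp_mulV a : a != 0 -> hyp a *m hyp a^-1 = 1.
Proof.
move=> a_neq0; rewrite mul_bdiag mul_mx2 mul1mx bdiag1 mx2_scalar.
by congr bdiag; congr mx2; field.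
Qed.

Lemma hyp_unit a : a != 0 -> hyp a \in unitmx.
Proof. by move=> a_neq0; case: (mulmx1_unit (hyp_mulV a_neq0)). Qed.

Lemma invmx_hyp a : a != 0 -> invmx (hyp a) = hyp a^-1.
Proof. by move=> a_neq0; apply: invmx_right; rewrite hyp_mulV. Qed.

Lemma hyp_conj_rot a t : a != 0 ->
  hyp a *m rot t *m invmx (hyp a) =
  bdiag (mx2 (cos t) (- (a * a) * sin t) ((a * a)^-1 * sin t) (cos t)) 1%:M.
Proof.
move=> a_neq0; rewrite invmx_hyp // !mul_bdiag !mul_mx2 !mul1mx.
by congr bdiag; congr mx2; field.
Qed.

Lemma hyp_conj_rot_pi a : a != 0 -> hyp a *m rot pi *m invmx (hyp a) = rot pi.
Proof.
by move=> a_neq0; rewrite hyp_conj_rot // /rot cospi sinpi; congr bdiag; congr mx2; ring.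
Qed.

Lemma hyp_conj_rot_pihalf a : a != 0 ->
  hyp a *m rot (pi / 2) *m invmx (hyp a) = quarter (a * a).
Proof.
move=> a_neq0; rewrite hyp_conj_rot // cos_pihalf sin_pihalf.
by congr bdiag; congr mx2; ring.
Qed.

Lemma intmx_bdiag (A : 'M[R]_2) (B : 'M[R]_n) : intmx A -> intmx B -> intmx (bdiag A B).
Proof.
move=> Aint Bint i j; rewrite /bdiag /block_mx !mxE.
case: (@fintype.split 2 n i) => i'; rewrite !mxE.
  by case: (@fintype.split 2 n j) => j'; rewrite ?mxE ?rpred0.
by case: (@fintype.split 2 n j) => j'; rewrite ?mxE ?rpred0.
Qed.

Lemma rot_pi_in_SLZ : in_SLZ (rot pi : M).
Proof.
have rot_piE : rot pi = bdiag (-1)%:M 1%:M :> M.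
  by rewrite /rot cospi sinpi mx2_scalar; congr bdiag; congr mx2; rewrite oppr0.
split; last by rewrite rot_piE det_bdiag det_scalar det1 mulr1 sqrrN expr1n.
rewrite rot_piE; apply: intmx_bdiag; apply: intmx_scalar.
  by rewrite rpredN rpred1.
exact: rpred1.
Qed.

Lemma quarter_mulN p : p != 0 -> quarter p *m quarter (- p) = 1.
Proof.
move=> p_neq0; rewrite mul_bdiag mul_mx2 mul1mx bdiag1 mx2_scalar.
by congr bdiag; congr mx2; field.
Qed.

Lemma invmx_quarter_mul p q : p != 0 -> q != 0 ->
  invmx (quarter q) *m quarter p = bdiag (mx2 (q / p) 0 0 (p / q)) 1%:M.
Proof.
move=> p_neq0 q_neq0; rewrite (invmx_right (quarter_mulN q_neq0)).
by rewrite mul_bdiag mul_mx2 mul1mx invrN; congr bdiag; congr mx2; ring.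
Qed.

Lemma quarter_coset g h p q : g \in unitmx -> 0 < p -> 0 < q ->
  same_coset (g *m quarter p) h -> same_coset (g *m quarter q) h -> p = q.
Proof.
move=> gU p_gt0 q_gt0 gph gqh.
have [p_neq0 q_neq0] : p != 0 /\ q != 0 by rewrite !gt_eqF.
have quarterU r : r != 0 -> quarter r \in unitmx.
  by move=> r_neq0; have [] := mulmx1_unit (quarter_mulN r_neq0).
have pqU : g *m quarter p \in unitmx by rewrite unitmx_mul gU quarterU.
have [] := same_coset_in_SLZ pqU gph gqh.
rewrite invmx_mul ?quarterU // -mulmxA (mulmxA (invmx g)) mulVmx // mul1mx.
rewrite invmx_quarter_mul // => ratio_int _.
have := ratio_int (lshift n (0 : 'I_2)) (lshift n (0 : 'I_2)).
have := ratio_int (lshift n (1 : 'I_2)) (lshift n (1 : 'I_2)).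
by rewrite !bdiagEul !mxE /=; apply: int_ratio_eq.
Qed.

Definition half_turn g a : M :=
  (g *m hyp a) *m (pi *: rot_gen) *m invmx (g *m hyp a).

Lemma expm_conj_rot (C : M) t : C \in unitmx ->
  expm (C *m (t *: rot_gen) *m invmx C) = C *m rot t *m invmx C.
Proof. by move=> CU; apply/has_expmE/has_expm_conj/has_expm_rot. Qed.

Lemma expm_hyp_conj_mul g a t : g \in unitmx -> a != 0 ->
  expm ((g *m hyp a) *m (t *: rot_gen) *m invmx (g *m hyp a)) *m g =
  g *m (hyp a *m rot t *m invmx (hyp a)).
Proof.
move=> gU a_neq0; have hU := hyp_unit a_neq0.
by rewrite expm_conj_rot ?unitmx_mul ?gU // invmx_mul // !mulmxA mulmxKV.
Qed.

Lemma connecting_half_turn g a : \det g = 1 -> a != 0 -> connecting g g (half_turn g a).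
Proof.
move=> det_g a_neq0; have gU : g \in unitmx by rewrite unitmxE det_g unitr1.
split.
  rewrite /in_slR /half_turn mxtrace_mulC mulmxA mulVmx ?unitmx_mul ?gU ?hyp_unit //.
  by rewrite mul1mx mxtraceZ mxtrace_bdiag mxtrace_mx2 mxtrace0 !addr0 mulr0.
rewrite /same_coset /half_turn expm_hyp_conj_mul // hyp_conj_rot_pi //.
rewrite invmx_mul ?(in_SLZ_unit rot_pi_in_SLZ) // -mulmxA mulVmx // mulmx1.
exact/in_SLZ_inv/rot_pi_in_SLZ.
Qed.

Lemma midpoint_half_turn g a : \det g = 1 -> a != 0 ->
  expm (2%:R^-1 *: half_turn g a) *m g = g *m quarter (a * a).
Proof.
move=> det_g a_neq0; have gU : g \in unitmx by rewrite unitmxE det_g unitr1.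
rewrite /half_turn scalemxAl scalemxAr scalerA [_ * pi]mulrC.
by rewrite expm_hyp_conj_mul // hyp_conj_rot_pihalf.
Qed.

Lemma not_midpoint_blockable_self g : \det g = 1 -> ~ midpoint_blockable g g.
Proof.
move=> det_g [s mid_s]; have gU : g \in unitmx by rewrite unitmxE det_g unitr1.
pose a k : R := k.+1%:R.
have a_neq0 k : a k != 0 by rewrite pnatr_eq0.
have /choice[f fP] : forall k,
    exists h, h \in s /\ same_coset (g *m quarter (a k * a k)) h.
  move=> k; have [h hs gh] := mid_s _ (connecting_half_turn det_g (a_neq0 k)).
  by exists h; rewrite -midpoint_half_turn.
have [i [j [lt_ij fij]]] := nat_pigeonhole (fun k => (fP k).1).
have sq_gt0 k : 0 < a k * a k by rewrite mulr_gt0 ?ltr0Sn.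
have := quarter_coset gU (sq_gt0 i) (sq_gt0 j) (fP i).2.
rewrite fij => /(_ (fP j).2).
rewrite /a -!natrM => /eqP; rewrite eqr_nat => /eqP sq_eq.
have lt_ij1 : (i.+1 < j.+1)%N by [].
by have := ltn_mul lt_ij1 lt_ij1; rewrite sq_eq ltnn.
Qed.

End Midpoints.

Theorem proposition6p3 (R : realType) (n : nat) (hn : (2 <= n)%N) :
  (exists g1 g2 : 'M[R]_n, in_SLR g1 /\ in_SLR g2 /\ ~ midpoint_blockable g1 g2) /\
  (forall g : 'M[R]_n, in_SLR g -> ~ midpoint_blockable_away_from_itself g).
Proof.
case: n hn => [|[|m]] // _.
have SLR1 : in_SLR (1%:M : 'M[R]_m.+2) by exact: det1.
split => [|g]; last exact: not_midpoint_blockable_self.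
by exists 1%:M, 1%:M; do !split => //; apply: not_midpoint_blockable_self.
Qed.
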